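(* Let $G$ be a group with a left-invariant metric $d$, and for $r>0$ let $G_r$ be the subgroup of $G$ generated by the ball $B(1_G,r)=\{g: d(1_G,g)<r\}$. If $\operatorname{asdim}(G_r)\le n$ for every $r>0$ (with the restricted metric), then $\operatorname{asdim}(G,d)\le n$.
   Context: For a metric space $Z$, $\operatorname{asdim}(Z)\le n$ iff for every $r>0$ there are $D<\infty$ and families $\mathcal U_1,\dots,\mathcal U_{n+1}$ of subsets of $Z$ covering $Z$, each $r$-disjoint (points in different members of a family are at distance $\ge r$), with members of diameter $\le D$. *)

From Stdlib Require Import Reals.
Open Scope R_scope.

Record is_group {G : Type} (mul : G -> G -> G) (inv : G -> G) (e : G) : Prop := {
  grp_assoc : forall x y z, mul x (mul y z) = mul (mul x y) z;
  grp_id_l : forall x, mul e x = x;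
  grp_id_r : forall x, mul x e = x;
  grp_inv_l : forall x, mul (inv x) x = e;
  grp_inv_r : forall x, mul x (inv x) = e
}.

Record is_metric {G : Type} (d : G -> G -> R) : Prop := {
  met_nonneg : forall x y, 0 <= d x y;
  met_eq0 : forall x y, d x y = 0 <-> x = y;
  met_sym : forall x y, d x y = d y x;
  met_triangle : forall x y z, d x z <= d x y + d y z
}.

Definition left_invariant {G : Type} (mul : G -> G -> G) (d : G -> G -> R) : Prop :=
  forall g x y, d (mul g x) (mul g y) = d x y.

Inductive gen_subgroup {G : Type} (mul : G -> G -> G) (inv : G -> G) (e : G)
    (S : G -> Prop) : G -> Prop :=
  | gs_base : forall x, S x -> gen_subgroup mul inv e S x
  | gs_id : gen_subgroup mul inv e S e
  | gs_mul : forall x y, gen_subgroup mul inv e S x -> gen_subgroup mul inv e S y ->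
      gen_subgroup mul inv e S (mul x y)
  | gs_inv : forall x, gen_subgroup mul inv e S x -> gen_subgroup mul inv e S (inv x).

Definition ball {G : Type} (d : G -> G -> R) (c : G) (r : R) : G -> Prop :=
  fun g => d c g < r.

(* A family is a predicate on subsets of G. *)
Definition asdim_le {G : Type} (d : G -> G -> R) (Z : G -> Prop) (n : nat) : Prop :=
  forall r : R, 0 < r ->
  exists (D : R) (U : nat -> (G -> Prop) -> Prop),
    (forall i A, (i < S n)%nat -> U i A -> forall x, A x -> Z x) /\
    (forall z, Z z -> exists i A, (i < S n)%nat /\ U i A /\ A z) /\
    (forall i A B x y, (i < S n)%nat -> U i A -> U i B -> A <> B ->
       A x -> B y -> r <= d x y) /\
    (forall i A x y, (i < S n)%nat -> U i A -> A x -> A y -> d x y <= D).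

(* The cosets of G_r are r-separated: if d(x, y) < r then x^-1 y lies in
   B(1, r), hence in G_r.  So, to build at scale r an (n+1)-coloured cover of
   G by uniformly bounded r-disjoint sets, take such a cover of G_r at scale r
   and translate it, by left multiplication with a chosen representative,
   into every left coset of G_r.  Left invariance keeps diameters and
   separation inside a coset; distinct cosets are separated by r anyway. *)

From Stdlib Require Import Reals.
From Stdlib Require Import ClassicalEpsilon FunctionalExtensionality PropExtensionality Classical.
Open Scope R_scope.

Section GroupFacts.

Context {G : Type} {mul : G -> G -> G} {inv : G -> G} {e : G}.
Hypothesis Hg : is_group mul inv e.

Lemma inv_unique x y : mul x y = e -> y = inv x.
Proof.
  intro Hxy.
  rewrite <- (grp_id_l _ _ _ Hg y), <- (grp_inv_l _ _ _ Hg x),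
    <- (grp_assoc _ _ _ Hg), Hxy, (grp_id_r _ _ _ Hg).
  reflexivity.
Qed.

Lemma inv_mul x y : inv (mul x y) = mul (inv y) (inv x).
Proof.
  symmetry; apply inv_unique.
  rewrite <- (grp_assoc _ _ _ Hg), (grp_assoc _ _ _ Hg y), (grp_inv_r _ _ _ Hg),
    (grp_id_l _ _ _ Hg), (grp_inv_r _ _ _ Hg).
  reflexivity.
Qed.

Lemma inv_inv x : inv (inv x) = x.
Proof. symmetry; apply inv_unique, (grp_inv_l _ _ _ Hg). Qed.

Lemma mul_inv_cancel_l x y : mul (inv x) (mul x y) = y.
Proof. rewrite (grp_assoc _ _ _ Hg), (grp_inv_l _ _ _ Hg), (grp_id_l _ _ _ Hg). reflexivity. Qed.

Lemma mul_inv_l_cancel x y : mul x (mul (inv x) y) = y.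
Proof. rewrite (grp_assoc _ _ _ Hg), (grp_inv_r _ _ _ Hg), (grp_id_l _ _ _ Hg). reflexivity. Qed.

End GroupFacts.

Section Cosets.

Context {G : Type} {mul : G -> G -> G} {inv : G -> G} {e : G}.
Hypothesis Hg : is_group mul inv e.

Variable H : G -> Prop.
Hypothesis H_id : H e.
Hypothesis H_mul : forall x y, H x -> H y -> H (mul x y).
Hypothesis H_inv : forall x, H x -> H (inv x).

Definition same_coset (x y : G) : Prop := H (mul (inv x) y).

Lemma same_coset_refl x : same_coset x x.
Proof. unfold same_coset; rewrite (grp_inv_l _ _ _ Hg); exact H_id. Qed.

Lemma same_coset_sym x y : same_coset x y -> same_coset y x.
Proof.
  unfold same_coset; intro Hxy.
  apply H_inv in Hxy; rewrite (inv_mul Hg), (inv_inv Hg) in Hxy.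
  exact Hxy.
Qed.

Lemma same_coset_trans x y z : same_coset x y -> same_coset y z -> same_coset x z.
Proof.
  unfold same_coset; intros Hxy Hyz.
  rewrite <- (mul_inv_l_cancel Hg y z), (grp_assoc _ _ _ Hg).
  exact (H_mul _ _ Hxy Hyz).
Qed.

Lemma same_coset_mulr c a : same_coset c (mul c a) <-> H a.
Proof. unfold same_coset; rewrite (mul_inv_cancel_l Hg); tauto. Qed.

Definition coset_rep (x : G) : G := epsilon (inhabits e) (same_coset x).

Lemma same_coset_rep x : same_coset x (coset_rep x).
Proof. apply (epsilon_spec (inhabits e) (same_coset x)); exists x; apply same_coset_refl. Qed.

Lemma coset_rep_eq x y : same_coset x y -> coset_rep x = coset_rep y.
Proof.
  intro Hxy; unfold coset_rep.
  replace (same_coset x) with (same_coset y); [reflexivity|].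
  apply functional_extensionality; intro z; apply propositional_extensionality.
  split; eauto using same_coset_trans, same_coset_sym.
Qed.

End Cosets.

Arguments same_coset {G} mul inv H x y.
Arguments coset_rep {G} mul inv e H x.

Definition translate {G : Type} (mul : G -> G -> G) (c : G) (A : G -> Prop) : G -> Prop :=
  fun z => exists a, A a /\ z = mul c a.

(* [asdim_le d Z n] unfolds to [forall r, 0 < r -> cover_at_scale d Z n r]. *)
Definition cover_at_scale {G : Type} (d : G -> G -> R) (Z : G -> Prop) (n : nat) (r : R) : Prop :=
  exists (D : R) (U : nat -> (G -> Prop) -> Prop),
    (forall i A, (i < S n)%nat -> U i A -> forall x, A x -> Z x) /\
    (forall z, Z z -> exists i A, (i < S n)%nat /\ U i A /\ A z) /\
    (forall i A B x y, (i < S n)%nat -> U i A -> U i B -> A <> B ->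
       A x -> B y -> r <= d x y) /\
    (forall i A x y, (i < S n)%nat -> U i A -> A x -> A y -> d x y <= D).

Section TranslatedCover.

Context {G : Type} {mul : G -> G -> G} {inv : G -> G} {e : G} {d : G -> G -> R}.
Hypothesis Hg : is_group mul inv e.
Hypothesis Hd : left_invariant mul d.

Variable H : G -> Prop.
Hypothesis H_id : H e.
Hypothesis H_mul : forall x y, H x -> H y -> H (mul x y).
Hypothesis H_inv : forall x, H x -> H (inv x).

Variable r : R.
Hypothesis ball_sub_H : forall x, ball d e r x -> H x.

Lemma same_coset_of_dist_lt x y : d x y < r -> same_coset mul inv H x y.
Proof.
  intro Hxy; apply ball_sub_H; unfold ball.
  rewrite <- (grp_inv_l _ _ _ Hg x), Hd; exact Hxy.
Qed.

Variables (n : nat) (D : R) (U : nat -> (G -> Prop) -> Prop).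
Hypothesis U_sub : forall i A, (i < S n)%nat -> U i A -> forall x, A x -> H x.
Hypothesis U_cover : forall z, H z -> exists i A, (i < S n)%nat /\ U i A /\ A z.
Hypothesis U_disj : forall i A B x y, (i < S n)%nat -> U i A -> U i B -> A <> B ->
  A x -> B y -> r <= d x y.
Hypothesis U_bdd : forall i A x y, (i < S n)%nat -> U i A -> A x -> A y -> d x y <= D.

Let rep := coset_rep mul inv e H.

Definition translated_family (i : nat) (B : G -> Prop) : Prop :=
  exists x A, U i A /\ B = translate mul (rep x) A.

Lemma translated_family_cover z :
  exists i B, (i < S n)%nat /\ translated_family i B /\ B z.
Proof.
  assert (Hz : H (mul (inv (rep z)) z)).
  { apply (same_coset_sym Hg H H_inv), (same_coset_rep Hg H H_id). }
  destruct (U_cover _ Hz) as [i [A [Hi [HA Az]]]].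
  exists i, (translate mul (rep z) A); repeat split; [exact Hi | exists z, A; auto |].
  exists (mul (inv (rep z)) z); split; [exact Az|].
  symmetry; apply (mul_inv_l_cancel Hg).
Qed.

Lemma translated_family_disjoint i B1 B2 x y : (i < S n)%nat ->
  translated_family i B1 -> translated_family i B2 -> B1 <> B2 ->
  B1 x -> B2 y -> r <= d x y.
Proof.
  intros Hi [x1 [A [HA ->]]] [x2 [B [HB ->]]] Hne [a [Aa ->]] [b [Bb ->]].
  destruct (classic (rep x1 = rep x2)) as [Heq | Hneq].
  - rewrite Heq, Hd in *.
    apply (U_disj i A B); auto; intros ->; apply Hne; reflexivity.
  - destruct (Rlt_le_dec (d (mul (rep x1) a) (mul (rep x2) b)) r) as [Hlt | Hle];
      [exfalso | exact Hle].
    apply Hneq, (coset_rep_eq Hg H H_mul H_inv).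
    (* x1 ~ rep x1 ~ rep x1 * a ~ rep x2 * b ~ rep x2 ~ x2 *)
    apply (same_coset_trans Hg H H_mul) with (rep x1); [apply (same_coset_rep Hg H H_id)|].
    apply (same_coset_trans Hg H H_mul) with (mul (rep x1) a);
      [apply (same_coset_mulr Hg); eauto|].
    apply (same_coset_trans Hg H H_mul) with (mul (rep x2) b);
      [apply same_coset_of_dist_lt; exact Hlt|].
    apply (same_coset_sym Hg H H_inv).
    apply (same_coset_trans Hg H H_mul) with (rep x2); [apply (same_coset_rep Hg H H_id)|].
    apply (same_coset_mulr Hg); eauto.
Qed.

Lemma translated_family_bounded i B x y : (i < S n)%nat ->
  translated_family i B -> B x -> B y -> d x y <= D.
Proof.
  intros Hi [x1 [A [HA ->]]] [a [Aa ->]] [b [Ab ->]].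
  rewrite Hd; exact (U_bdd i A a b Hi HA Aa Ab).
Qed.

End TranslatedCover.

Arguments translated_family {G} mul inv e H U i B.

Lemma cover_at_scale_of_subgroup (G : Type) (mul : G -> G -> G) (inv : G -> G) (e : G)
  (d : G -> G -> R) (H : G -> Prop) (n : nat) (r : R) :
  is_group mul inv e -> left_invariant mul d ->
  H e -> (forall x y, H x -> H y -> H (mul x y)) -> (forall x, H x -> H (inv x)) ->
  (forall x, ball d e r x -> H x) ->
  cover_at_scale d H n r -> cover_at_scale d (fun _ => True) n r.
Proof.
  intros Hg Hd H_id H_mul H_inv Hball [D [U [U_sub [U_cover [U_disj U_bdd]]]]].
  exists D, (translated_family mul inv e H U).
  repeat split.
  - intros z _; eapply translated_family_cover; eauto.
  - eapply translated_family_disjoint; eauto.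
  - eapply translated_family_bounded; eauto.
Qed.

Theorem mainTheorem11 (G : Type) (mul : G -> G -> G) (inv : G -> G) (e : G)
  (d : G -> G -> R) (n : nat)
  (Hgrp : is_group mul inv e) (Hmet : is_metric d)
  (Hinv : left_invariant mul d)
  (Hsub : forall r : R, 0 < r ->
     asdim_le d (gen_subgroup mul inv e (ball d e r)) n) :
  asdim_le d (fun _ => True) n.
Proof.
  intros r Hr.
  apply (cover_at_scale_of_subgroup G mul inv e d (gen_subgroup mul inv e (ball d e r))).
  - exact Hgrp.
  - exact Hinv.
  - apply gs_id.
  - apply gs_mul.
  - apply gs_inv.
  - apply gs_base.
  - exact (Hsub r Hr r Hr).
Qed.
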